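(* Let $X$ be a real Hilbert space and $A,B$ closed convex nonempty subsets of $X$ such that $E$ and $F$ are nonempty and bounded. Let $\{A_n\}$, $\{B_n\}$ be sequences of closed convex nonempty subsets of $X$ with $A_n\to A$ and $B_n\to B$ in the Attouch–Wets sense. Then for each $M>0$ there exist $\theta\in(0,M)$ and $n_0\in\mathbb N$ such that for every $n\ge n_0$: (i) if $b_n\in B_n$, $a_n=P_{A_n}b_n$ and $\mathrm{dist}(b_n,F)\le\theta$, then $\mathrm{dist}(a_n,E)\le 2M$; (ii) if $a_n\in A_n$, $b_{n+1}=P_{B_{n+1}}a_n$ and $\mathrm{dist}(a_n,E)\le\theta$, then $\mathrm{dist}(b_{n+1},F)\le 2M$.
   Context: $P_C$ is the metric projection onto a closed convex nonempty set $C$; $B_X$ the closed unit ball; $\mathrm{dist}(x,S)=\inf_{s\in S}\|x-s\|$, $\mathrm{dist}(S,T)=\inf_{s\in S}\mathrm{dist}(s,T)$. $E=\{a\in A:\mathrm{dist}(a,B)=\mathrm{dist}(A,B)\}$, $F=\{b\in B:\mathrm{dist}(b,A)=\mathrm{dist}(A,B)\}$. Attouch–Wets convergence: for nonempty closed $C,D$ and $N\in\mathbb N$ let $e_N(C,D)=\sup_{c\in C\cap NB_X}\mathrm{dist}(c,D)$ ($0$ if $C\cap NB_X=\emptyset$) and $h_N(C,D)=\max\{e_N(C,D),e_N(D,C)\}$; $C_j\to C$ if $\lim_j h_N(C_j,C)=0$ for every $N\in\mathbb N$. *)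

From HB Require Import structures.
From mathcomp Require Import all_boot all_order all_algebra.
From mathcomp Require Import all_classical all_reals all_analysis.
Set Implicit Arguments. Unset Strict Implicit. Unset Printing Implicit Defensive.
Import Order.TTheory GRing.Theory Num.Theory.
Import numFieldNormedType.Exports.
Local Open Scope classical_set_scope.
Local Open Scope ring_scope.

(* A real Hilbert space: a complete normed space over R whose norm comes from
   an inner product ip (symmetric, bilinear, <x,x> = |x|^2). *)
Definition inner_product (R : realType) (V : normedModType R) (ip : V -> V -> R) :=
  [/\ (forall x y, ip x y = ip y x),
      (forall (a : R) (x y z : V), ip (a *: x + y) z = a * ip x z + ip y z) &
      (forall x, ip x x = `|x| ^+ 2)].

Definition ccn (R : realType) (V : normedModType R) (C : set V) :=
  [/\ closed C, convex_set (C : set (convex_lmodType V)) & C !=set0].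

Definition dist (R : realType) (V : normedModType R) (x : V) (S : set V) : R :=
  inf [set `|x - s| | s in S].

Definition dist_sets (R : realType) (V : normedModType R) (S T : set V) : R :=
  inf [set dist s T | s in S].

Definition best_set (R : realType) (V : normedModType R) (A B : set V) : set V :=
  [set a | A a /\ dist a B = dist_sets A B].

Definition best_set_F (R : realType) (V : normedModType R) (A B : set V) : set V :=
  [set b | B b /\ dist b A = dist_sets A B].

Definition is_proj (R : realType) (V : normedModType R) (C : set V) (x a : V) :=
  C a /\ forall c, C c -> `|x - a| <= `|x - c|.

Definition excess (R : realType) (V : normedModType R) (N : nat) (C D : set V) : R :=
  let CN := C `&` [set x | `|x| <= N%:R] in
  if `[< CN = set0 >] then 0 else sup [set dist c D | c in CN].

Definition hN (R : realType) (V : normedModType R) (N : nat) (C D : set V) : R :=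
  Num.max (excess N C D) (excess N D C).

Definition AW_cvg (R : realType) (V : normedModType R) (Cs : nat -> set V) (C : set V) :=
  forall N : nat, (fun j => hN N (Cs j) C) @ \oo --> (0 : R).

(* In a Hilbert space, if [a] is the projection of [b] onto a convex set [D] and
   [q] is in [D], the parallelogram law for [b - a] and [b - q] (whose half-sum
   is [b] minus a point of [D]) gives [|a - q|^2 <= 2 (|b - q|^2 - |b - a|^2)]:
   a point of [D] almost as close to [b] as the nearest one is close to the
   projection itself.
   For (i), pick [f] in [F] near [b_n] and let [e = P_A f]; then [e] is in [E]
   and [|f - e| = dist(A,B)].  On a ball containing the bounded sets [E], [F],
   Attouch-Wets convergence provides [q] in [A_n] near [e] and a point of [A]
   near [a_n], so both [|b_n - q|] and [|b_n - a_n|] are close to [dist(A,B)];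
   hence [a_n] is close to [q], and so to [e].  Part (ii) is the same argument
   with [A] and [B] exchanged. *)

From HB Require Import structures.
From mathcomp Require Import all_boot all_order all_algebra.
From mathcomp Require Import all_classical all_reals all_analysis.
From mathcomp Require Import ring lra.
Import Order.TTheory GRing.Theory Num.Theory.
Import numFieldNormedType.Exports.
Local Open Scope classical_set_scope.
Local Open Scope ring_scope.
Set Implicit Arguments. Unset Strict Implicit.

Section InnerProduct.
Variables (R : realType) (X : normedModType R) (ip : X -> X -> R).
Hypothesis hip : inner_product ip.

Lemma ipC x y : ip x y = ip y x.
Proof. by case: hip. Qed.

Lemma ipZDl a x y z : ip (a *: x + y) z = a * ip x z + ip y z.
Proof. by case: hip. Qed.

Lemma ipxx x : ip x x = `|x| ^+ 2.
Proof. by case: hip. Qed.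

Lemma ip0l z : ip 0 z = 0.
Proof. by have := ipZDl 1 0 0 z; rewrite scaler0 addr0 mul1r; lra. Qed.

Lemma ipDl x y z : ip (x + y) z = ip x z + ip y z.
Proof. by rewrite -[x in LHS]scale1r ipZDl mul1r. Qed.

Lemma ipNl x z : ip (- x) z = - ip x z.
Proof. by rewrite -[- x]addr0 -scaleN1r ipZDl ip0l addr0 mulN1r. Qed.

Lemma sqr_normD (x y : X) : `|x + y| ^+ 2 = `|x| ^+ 2 + 2 * ip x y + `|y| ^+ 2.
Proof.
by rewrite -!ipxx !ipDl [ip x (x + y)]ipC [ip y (x + y)]ipC !ipDl [ip y x]ipC; ring.
Qed.

Lemma parallelogram_law (x y : X) :
  `|x + y| ^+ 2 + `|x - y| ^+ 2 = 2 * `|x| ^+ 2 + 2 * `|y| ^+ 2.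
Proof. by rewrite !sqr_normD normrN [ip x (- y)]ipC ipNl [ip y x]ipC; ring. Qed.

Lemma convex_midpoint (C : set X) (p q : X) :
  convex_set (C : set (convex_lmodType X)) -> C p -> C q -> C (2^-1 *: (p + q)).
Proof.
move=> cvxC Cp Cq.
have half_ge0 : 0 <= 2^-1 :> R by rewrite invr_ge0.
have half_le1 : 2^-1 <= 1 :> R by rewrite invf_le1 ?ler1n.
have := cvxC p q (Itv01 half_ge0 half_le1); rewrite !inE => /(_ Cp Cq).
congr C; rewrite /= scalerDr; congr (_ *: _ + _ *: _).
rewrite /unstable.onem /=; lra.
Qed.

Lemma convex_sqr_norm_sub_le (C : set X) (x p q : X) (dl : R) :
  convex_set (C : set (convex_lmodType X)) -> C p -> C q -> 0 <= dl ->
  (forall c, C c -> dl <= `|x - c|) ->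
  `|p - q| ^+ 2 <= 2 * `|x - p| ^+ 2 + 2 * `|x - q| ^+ 2 - 4 * dl ^+ 2.
Proof.
move=> cvxC Cp Cq dl_ge0 dl_le.
have sum_eq : (x - p) + (x - q) = 2 *: (x - 2^-1 *: (p + q)).
  rewrite scalerBr scalerA mulfV ?pnatr_eq0 // scale1r scaler_nat mulr2n.
  by rewrite opprD addrACA.
have diff_eq : (x - p) - (x - q) = q - p by rewrite opprB addrC addrA subrK.
have := parallelogram_law (x - p) (x - q).
rewrite sum_eq diff_eq normrZ ger0_norm // (distrC q p).
have : dl ^+ 2 <= `|x - 2^-1 *: (p + q)| ^+ 2.
  by rewrite lerXn2r ?nnegrE // dl_le //; exact: convex_midpoint.
nra.
Qed.

Lemma proj_sqr_norm_sub_lt (C : set X) (x a q : X) (d s : R) :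
  convex_set (C : set (convex_lmodType X)) -> is_proj C x a -> C q -> 0 <= d ->
  `|x - q| < d + s -> d - s < `|x - a| -> `|a - q| ^+ 2 < 8 * s * (d + s).
Proof.
move=> cvxC [Ca a_min] Cq d_ge0 xq_lt xa_gt.
have := convex_sqr_norm_sub_le cvxC Ca Cq (normr_ge0 (x - a)) a_min.
have := a_min q Cq; have := normr_ge0 (x - a); nra.
Qed.

Lemma minimizing_seq_cauchy (C : set X) (x : X) (d : R) (c : nat -> X) :
  convex_set (C : set (convex_lmodType X)) -> 0 <= d ->
  (forall m, C m -> d <= `|x - m|) -> (forall n, C (c n)) ->
  (forall n, `|x - c n| < d + n.+1%:R^-1) -> cauchy (c @ \oo).
Proof.
move=> cvxC d_ge0 d_le Cc c_min; apply: cauchy_exP => e e_gt0.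
have c_close n m : (n <= m)%N -> `|c n - c m| ^+ 2 <= 4 * (2 * d + 1) * n.+1%:R^-1.
  move=> le_nm; set en := n.+1%:R^-1.
  have en_gt0 : 0 < en by rewrite invr_gt0 ltr0n.
  have en_le1 : en <= 1 by rewrite invf_le1 // ler1n.
  have sqr_le k : (n <= k)%N -> `|x - c k| ^+ 2 <= (d + en) ^+ 2.
    move=> le_nk; rewrite ler_sqr ?nnegrE ?addr_ge0 ?(ltW en_gt0) //.
    apply: le_trans (ltW (c_min k)) _.
    by rewrite lerD2l lef_pV2 ?posrE // ler_nat.
  have := convex_sqr_norm_sub_le cvxC (Cc n) (Cc m) d_ge0 d_le.
  have := sqr_le n (leqnn n); have := sqr_le m le_nm; nra.
have t_gt0 : 0 < e ^+ 2 / (4 * (2 * d + 1)) by rewrite divr_gt0 ?exprn_gt0 //; lra.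
have [N _ N_lt] := near_infty_natSinv_lt (PosNum t_gt0).
exists (c N), N => // m /= le_Nm.
rewrite -ball_normE /ball_ /= -ltr_sqr ?nnegrE ?(ltW e_gt0) //.
have := c_close N m le_Nm; have := N_lt N (leqnn N).
rewrite /= ltr_pdivlMr; last lra.
set en := N.+1%:R^-1; lra.
Qed.

End InnerProduct.

Section Distance.
Variables (R : realType) (X : normedModType R).
Implicit Types (x s : X) (S : set X).

Lemma dist_le_norm x S s : S s -> dist x S <= `|x - s|.
Proof. by move=> Ss; apply: ge_inf; [exists 0 => _ [? _ <-] | exists s]. Qed.

Lemma dist_ge x S r : S !=set0 -> (forall s, S s -> r <= `|x - s|) -> r <= dist x S.
Proof.
move=> [s Ss] r_le; apply: lb_le_inf; first by exists `|x - s|, s.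
by move=> _ [t St <-]; exact: r_le.
Qed.

Lemma dist_ge0 x S : S !=set0 -> 0 <= dist x S.
Proof. by move=> S0; apply: dist_ge. Qed.

Lemma dist_lt_approx x S eps : S !=set0 -> 0 < eps ->
  exists2 s, S s & `|x - s| < dist x S + eps.
Proof.
move=> [s0 Ss0] eps_gt0.
have infS : has_inf [set `|x - s| | s in S].
  by split; [exists `|x - s0|, s0 | exists 0 => _ [? _ <-]].
by have [_ [s Ss <-]] := inf_adherent eps_gt0 infS; exists s.
Qed.

Lemma is_proj_dist (C : set X) x p : is_proj C x p -> `|x - p| = dist x C.
Proof.
by move=> [Cp p_min]; apply/le_anti; rewrite dist_le_norm // dist_ge //; exists p.
Qed.

End Distance.

Section Projection.
Variables (R : realType) (X : completeNormedModType R) (ip : X -> X -> R).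
Hypothesis hip : inner_product ip.

Lemma proj_exists (C : set X) (x : X) : ccn C -> exists p, is_proj C x p.
Proof.
move=> [clC cvxC C0]; set d := dist x C; have d_ge0 : 0 <= d := dist_ge0 x C0.
have d_le m : C m -> d <= `|x - m| by exact: dist_le_norm.
have approx n : exists cn, C cn /\ `|x - cn| < d + n.+1%:R^-1.
  have en_gt0 : 0 < n.+1%:R^-1 :> R by rewrite invr_gt0 ltr0n.
  by have [cn ? ?] := dist_lt_approx x C0 en_gt0; exists cn.
have [c c_near] := choice approx.
have Cc n : C (c n) by case: (c_near n).
have c_cvg : cvg (c @ \oo).
  apply: cauchy_cvg; apply: (minimizing_seq_cauchy hip cvxC d_ge0 d_le Cc) => n.
  by case: (c_near n).
exists (lim (c @ \oo)); split; first by apply: (closed_cvg C clC _ _ c_cvg); apply: nearW.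
move=> m Cm; apply: le_trans (d_le _ Cm); apply/ler_addgt0Pr => e e_gt0.
have: closed_ball x (d + e) (lim (c @ \oo)).
  apply: (closed_cvg _ (@closed_ball_closed _ _ x (d + e)) _ _ c_cvg).
  have [N _ N_lt] := near_infty_natSinv_lt (PosNum e_gt0).
  exists N => // n /= le_Nn; rewrite closed_ballE /closed_ball_ /=; last lra.
  have [_ /ltW/le_trans -> //] := c_near n; rewrite lerD2l; exact/ltW/N_lt.
by rewrite closed_ballE /closed_ball_ /=; last lra.
Qed.

End Projection.

Section AttouchWets.
Variables (R : realType) (X : normedModType R).

Lemma excess_lt_near (N : nat) (C D : set X) (c : X) (eps : R) :
  C c -> `|c| <= N%:R -> D !=set0 -> excess N C D < eps ->
  exists2 q, D q & `|c - q| < eps.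
Proof.
move=> Cc cN [d Dd].
have CNc : (C `&` [set x | `|x| <= N%:R]) c by [].
rewrite /excess asboolF => [excess_lt|CN0]; last by rewrite CN0 in CNc.
have dist_le_sup : dist c D <= sup [set dist c' D | c' in C `&` [set x | `|x| <= N%:R]].
  apply: sup_upper_bound; last by exists c.
  split; first by exists (dist c D), c.
  exists (N%:R + `|d|) => _ [c' [_ c'N] <-].
  apply: le_trans (dist_le_norm c' Dd) _; apply: le_trans (ler_normB c' d) _.
  by rewrite lerD2r.
have gap_gt0 : 0 < eps - dist c D by rewrite subr_gt0; exact: le_lt_trans excess_lt.
have [q Dq cq_lt] := dist_lt_approx c (ex_intro _ d Dd) gap_gt0.
by exists q => //; rewrite subrKC in cq_lt.
Qed.

Lemma AW_cvg_near (Cs : nat -> set X) (C : set X) :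
  C !=set0 -> (forall n, Cs n !=set0) -> AW_cvg Cs C ->
  forall (N : nat) (eps : R), 0 < eps -> \forall n \near \oo,
    (forall c, C c -> `|c| <= N%:R -> exists2 q, Cs n q & `|c - q| < eps) /\
    (forall c, Cs n c -> `|c| <= N%:R -> exists2 q, C q & `|c - q| < eps).
Proof.
move=> C0 Cs0 CsC N eps eps_gt0.
apply: filterS ((cvgrPdist_lt _ _).1 (CsC N) eps eps_gt0) => n.
rewrite sub0r normrN => /(le_lt_trans (ler_norm _)).
rewrite /hN gt_max => /andP[exc_Cs exc_C]; split=> c Cc cN.
  exact: excess_lt_near Cc cN (Cs0 n) exc_C.
exact: excess_lt_near Cc cN C0 exc_Cs.
Qed.

End AttouchWets.

Lemma exists_small_slack (R : realType) (d M : R) : 0 < M -> 0 <= d ->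
  exists s, [/\ 0 < s, s <= 1, s <= M & 8 * s * (d + 1) <= M ^+ 2].
Proof.
move=> M_gt0 d_ge0; exists (Num.min 1 (Num.min M (M ^+ 2 / (8 * (d + 1))))).
split; rewrite ?ge_min ?lexx ?orbT //.
  by rewrite !lt_min ltr01 M_gt0 divr_gt0 ?exprn_gt0 //; lra.
have : Num.min 1 (Num.min M (M ^+ 2 / (8 * (d + 1)))) <= M ^+ 2 / (8 * (d + 1)).
  by rewrite !ge_min lexx !orbT.
rewrite ler_pdivlMr; [nra | lra].
Qed.

Section ProjectionStability.
Variables (R : realType) (X : completeNormedModType R) (ip : X -> X -> R).
Hypothesis hip : inner_product ip.
Variables (C : set X) (Cs : nat -> set X) (S T : set X) (d : R).
Hypotheses (hC : ccn C) (hCs : forall n, ccn (Cs n)) (CsC : AW_cvg Cs C).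
Hypotheses (S0 : S !=set0) (Sb : bounded_set S) (Tb : bounded_set T).
Hypothesis dist_S : forall f, S f -> dist f C = d.
Hypothesis nearest_T : forall f c, S f -> C c -> `|f - c| = d -> T c.

Lemma proj_stays_near_target (M : R) : 0 < M ->
  exists theta n0, 0 < theta /\ theta < M /\
  forall n, (n0 <= n)%N -> forall b a, is_proj (Cs n) b a ->
    dist b S <= theta -> dist a T <= 2 * M.
Proof.
move=> M_gt0; have [f0 Sf0] := S0; have C0 : C !=set0 by case: hC.
have Cs0 n : Cs n !=set0 by case: (hCs n).
have d_ge0 : 0 <= d by rewrite -(dist_S Sf0) dist_ge0.
have [s [s_gt0 s_le1 s_leM s_small]] := exists_small_slack M_gt0 d_ge0.
have [rS rS_gt0 S_lt] := ex_strict_bound_gt0 Sb.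
have [rT rT_gt0 T_lt] := ex_strict_bound_gt0 Tb.
(* The ball of radius [N] contains [T] and every projection [a] met below. *)
pose N := (Num.truncn (rS + rT + d + 2)).+1.
have N_gt : rS + rT + d + 2 < N%:R by exact: truncnS_gt.
have s2_gt0 : 0 < s / 2 by lra.
have [n0 _ AW_n0] := AW_cvg_near C0 Cs0 CsC N s2_gt0.
exists (s / 4), n0; split; first lra; split; first lra.
move=> n le_n0n b a a_proj b_near; have [Cn_near C_near] := AW_n0 n le_n0n.
have s4_gt0 : 0 < s / 4 by lra.
have [f Sf bf_lt] := dist_lt_approx b S0 s4_gt0.
have f_lt : `|f| < rS := S_lt f Sf.
have [e e_proj] := proj_exists hip f hC.
have fe_eq : `|f - e| = d by rewrite (is_proj_dist e_proj) dist_S.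
have Te : T e := nearest_T Sf e_proj.1 fe_eq.
have e_le : `|e| <= N%:R by have : `|e| < rT := T_lt e Te; lra.
have [q Cnq eq_lt] := Cn_near e e_proj.1 e_le.
have bq_lt : `|b - q| < d + s.
  by have := ler_distD f b q; have := ler_distD e f q; lra.
have ba_le := a_proj.2 q Cnq.
have a_le : `|a| <= N%:R.
  have := ler_distD b a 0; have := ler_distD f b 0; rewrite !subr0 (distrC a b); lra.
have [q' Cq' aq'_lt] := C_near a a_proj.1 a_le.
have ba_gt : d - s < `|b - a|.
  have := dist_le_norm f Cq'; rewrite dist_S //.
  by have := ler_distD b f q'; have := ler_distD a b q'; rewrite (distrC f b); lra.
have cvx_Cn : convex_set (Cs n : set (convex_lmodType X)) by case: (hCs n).
have aq_sqr := proj_sqr_norm_sub_lt hip cvx_Cn a_proj Cnq d_ge0 bq_lt ba_gt.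
have aq_lt : `|a - q| < M.
  by rewrite -ltr_sqr ?nnegrE ?(ltW M_gt0) //; nra.
apply: le_trans (dist_le_norm a Te) _.
by have := ler_distD q a e; rewrite (distrC q e); lra.
Qed.

End ProjectionStability.

Section BestApproximation.
Variables (R : realType) (X : normedModType R) (A B : set X).

Lemma dist_sets_le_dist (a : X) : A a -> B !=set0 -> dist_sets A B <= dist a B.
Proof.
move=> Aa B0; apply: ge_inf; last by exists a.
by exists 0 => _ [? _ <-]; exact: dist_ge0.
Qed.

Lemma dist_sets_attained (a b : X) : A a -> B b -> `|a - b| = dist_sets A B ->
  best_set A B a /\ best_set_F A B b.
Proof.
move=> Aa Bb ab_eq; have B0 : B !=set0 by exists b.
split; split=> //; apply/le_anti.
  by rewrite dist_sets_le_dist // andbT -ab_eq dist_le_norm.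
rewrite -ab_eq distrC dist_le_norm //= distrC ab_eq; apply: dist_ge; first by exists a.
by move=> a' Aa'; rewrite distrC (le_trans (dist_sets_le_dist Aa' B0)) ?dist_le_norm.
Qed.

End BestApproximation.

Unset Implicit Arguments. Set Strict Implicit.

Theorem proposition4p9 (R : realType) (X : completeNormedModType R)
  (ip : X -> X -> R) (hip : inner_product ip)
  (A B : set X) (hA : ccn A) (hB : ccn B)
  (hE0 : best_set A B !=set0) (hF0 : best_set_F A B !=set0)
  (hEb : bounded_set (best_set A B)) (hFb : bounded_set (best_set_F A B))
  (As Bs : nat -> set X) (hAs : forall n, ccn (As n)) (hBs : forall n, ccn (Bs n))
  (hAcvg : AW_cvg As A) (hBcvg : AW_cvg Bs B) :
  forall M : R, 0 < M ->
  exists theta : R, exists n0 : nat, 0 < theta /\ theta < M /\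
  forall n : nat, (n0 <= n)%N ->
    (forall bn an : X, Bs n bn -> is_proj (As n) bn an ->
       dist bn (best_set_F A B) <= theta -> dist an (best_set A B) <= 2 * M) /\
    (forall an bn1 : X, As n an -> is_proj (Bs n.+1) an bn1 ->
       dist an (best_set A B) <= theta -> dist bn1 (best_set_F A B) <= 2 * M).
Proof.
move=> M M_gt0.
have dist_F f : best_set_F A B f -> dist f A = dist_sets A B by case.
have dist_E e : best_set A B e -> dist e B = dist_sets A B by case.
have F_to_E f c : best_set_F A B f -> A c -> `|f - c| = dist_sets A B -> best_set A B c.
  by move=> [Bf _] Ac; rewrite distrC => /(dist_sets_attained Ac Bf) [].
have E_to_F e c : best_set A B e -> B c -> `|e - c| = dist_sets A B -> best_set_F A B c.
  by move=> [Ae _] Bc /(dist_sets_attained Ae Bc) [].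
have [t1 [n1 [t1_gt0 [t1_lt near1]]]] :=
  proj_stays_near_target hip hA hAs hAcvg hF0 hFb hEb dist_F F_to_E M_gt0.
have [t2 [n2 [t2_gt0 [t2_lt near2]]]] :=
  proj_stays_near_target hip hB hBs hBcvg hE0 hEb hFb dist_E E_to_F M_gt0.
exists (Num.min t1 t2), (maxn n1 n2); split; first by rewrite lt_min t1_gt0.
split; first by rewrite gt_min t1_lt.
move=> n le_n; split=> [bn an _ an_proj bn_near | an bn1 _ bn1_proj an_near].
  apply: near1 an_proj _; first by rewrite (leq_trans _ le_n) ?leq_maxl.
  by apply: le_trans bn_near _; rewrite ge_min lexx.
apply: near2 bn1_proj _; first by rewrite (leq_trans _ (leqW le_n)) ?leq_maxr.
by apply: le_trans an_near _; rewrite ge_min lexx orbT.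
Qed.
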